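(* Let $a,n\in\mathbb{N}$, $k_1,\ldots,k_n\in\mathbb{N}$, $K=\operatorname{lcm}(k_1,\ldots,k_n)$, let $f_1,\ldots,f_n,g_1,\ldots,g_n$ be arbitrary arithmetic functions, and put $H(m)=\prod_{i=1}^n s^{(1)}_{f_i,g_i,\mathbf 1}(k_i,m)$. For $N\in\mathbb{N}$ let $\Psi^{(a)}(N)=\sum_{1\le\ell\le N^a,\ (\ell,N^a)_a=1}\omega(\ell)$ and $\Phi^{(a)}(N)=\#\{\ell\in\{1,\ldots,N^a\}:(\ell,N^a)_a=1\}$. (i) If $\omega$ is completely multiplicative, then $\sum_{j=1}^{K^a}\omega(j)\prod_{i=1}^n s^{(a)}_{f_i,g_i,\mathbf 1}(k_i,j)=\sum_{d|K}\omega(d)^a H(d)\Psi^{(a)}(K/d)$. (ii) If $\omega$ is completely additive, then $\sum_{j=1}^{K^a}\omega(j)\prod_{i=1}^n s^{(a)}_{f_i,g_i,\mathbf 1}(k_i,j)=\sum_{d|K}\omega(d^a)H(d)\Phi^{(a)}(K/d)+\sum_{d|K}H(d)\Psi^{(a)}(K/d)$.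
   Context: An arithmetic function is a map $\mathbb{N}\to\mathbb{C}$. For $a\in\mathbb{N}$, $s^{(a)}_{f,g,\mathbf 1}(k,j)=\sum_{d|k,\ d^a|j} f(d)\,g(k/d)$ (so $s^{(1)}_{f,g,\mathbf 1}(k,j)=\sum_{d|\gcd(k,j)}f(d)g(k/d)$). For $j,N\in\mathbb{N}$, the generalized gcd $(j,N^a)_a$ is the largest $d\in\mathbb{N}$ with $d|N$ and $d^a|j$. $\omega$ is completely multiplicative if $\omega(1)=1$ and $\omega(mn)=\omega(m)\omega(n)$; completely additive if $\omega(mn)=\omega(m)+\omega(n)$. *)

(* Arithmetic functions are modelled as nat -> algC
   (algebraic complex numbers); the value at 0 is irrelevant. *)
From HB Require Import structures.
From mathcomp Require Import all_boot all_order all_algebra all_field.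
Set Implicit Arguments. Unset Strict Implicit. Unset Printing Implicit Defensive.
Import Order.TTheory GRing.Theory Num.Theory.
Local Open Scope ring_scope.

Definition sfun (a : nat) (f g : nat -> algC) (k j : nat) : algC :=
  \sum_(d <- divisors k | (d ^ a %| j)%N) f d * g (k %/ d)%N.

(* generalized gcd (j, N^a)_a: largest d with d | N and d^a | j  (N >= 1) *)
Definition ggcd (a j N : nat) : nat :=
  \max_(d <- divisors N | (d ^ a %| j)%N) d.

Definition Psi (omega : nat -> algC) (a N : nat) : algC :=
  \sum_(1 <= l < (N ^ a).+1 | ggcd a l N == 1%N) omega l.

Definition Phi (a N : nat) : nat :=
  #|[set l : 'I_(N ^ a).+1 | (0 < l)%N && (ggcd a l N == 1%N)]|.

Definition completely_multiplicative (omega : nat -> algC) : Prop :=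
  omega 1%N = 1 /\ forall m n, (0 < m)%N -> (0 < n)%N -> omega (m * n)%N = omega m * omega n.

Definition completely_additive (omega : nat -> algC) : Prop :=
  forall m n, (0 < m)%N -> (0 < n)%N -> omega (m * n)%N = omega m + omega n.

From HB Require Import structures.
From mathcomp Require Import all_boot all_order all_algebra all_field.
From mathcomp Require Import zify.
Import Order.TTheory GRing.Theory Num.Theory.
Set Implicit Arguments. Unset Strict Implicit.

(* Write (j, N^a)_a for ggcd a j N, "the largest d | N with d^a | j".
   1. Since e^a | j and m^a | j imply lcm(e,m)^a | j, the admissible divisors
      of N are closed under lcm; hence (j, N^a)_a is the greatest admissible
      divisor in the divisibility order (ggcd_greatest, ggcd_unique).
   2. Consequently s^(a)(k, j) = s^(1)(k, (j, K^a)_a) whenever k | K, so the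
      product over i equals H((j, K^a)_a) (sfun_ggcd), and
      (d^a l, K^a)_a = d (l, (K/d)^a)_a for d | K (ggcd_mul).
   3. Grouping the j in [1, K^a] according to d = (j, K^a)_a and writing
      j = d^a l turns the sum into sum_{d | K} H(d) Psi_{w_d}(K/d), where
      w_d(l) = omega(d^a l) (sum_by_ggcd).
   4. Psi is linear in the weight and counts Phi for the weight 1; for a
      completely multiplicative (resp. additive) omega the dilated weight w_d
      is omega(d)^a omega (resp. omega(d^a) + omega), which gives (i) and (ii). *)

Lemma lcmn_coprime e m : coprime e m -> lcmn e m = e * m.
Proof. by move=> /eqP cop; rewrite -muln_lcm_gcd cop muln1. Qed.

(* Powers distribute over lcm: split e and m through their gcd into coprime parts. *)
Lemma expn_lcm a e m : lcmn e m ^ a = lcmn (e ^ a) (m ^ a).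
Proof.
have [g_gt0|] := boolP (0 < gcdn e m); last first.
  rewrite gcdn_gt0 negb_or -!eqn0Ngt => /andP[/eqP-> /eqP->].
  by rewrite lcm0n; case: a => [|a] //; rewrite exp0n // lcm0n.
have cop : coprime (e %/ gcdn e m) (m %/ gcdn e m).
  by rewrite /coprime -(eqn_pmul2r g_gt0) mul1n muln_gcdl !divnK ?dvdn_gcdl ?dvdn_gcdr.
move: cop (divnK (dvdn_gcdl e m)) (divnK (dvdn_gcdr e m)).
set g := gcdn e m; set e' := e %/ g; set m' := m %/ g; clearbody g e' m'.
move=> cop <- <-.
rewrite -muln_lcml (lcmn_coprime cop) !expnMn -muln_lcml lcmn_coprime //.
by rewrite coprimeXl ?coprimeXr.
Qed.

Lemma dvdn_lcm_expn a e m j : e ^ a %| j -> m ^ a %| j -> lcmn e m ^ a %| j.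
Proof. by move=> ej mj; rewrite expn_lcm dvdn_lcm ej mj. Qed.

Section GeneralizedGcd.
Variables (a N : nat).
Hypothesis N_gt0 : 0 < N.

Lemma ggcd_admissible j : ggcd a j N %| N /\ ggcd a j N ^ a %| j.
Proof.
have admissible_or_0 : (ggcd a j N \in divisors N /\ ggcd a j N ^ a %| j) \/ ggcd a j N = 0.
  rewrite /ggcd big_seq_cond.
  apply: (big_ind (fun x => (x \in divisors N /\ x ^ a %| j) \/ x = 0)); first by right.
    by move=> x y x_ok y_ok; rewrite /maxn; case: ifP.
  by move=> d /andP[dN dj]; left.
have ggcd_gt0 : 0 < ggcd a j N.
  by apply: (bigmaxn_sup_seq 1 (divisor1 N)); rewrite ?exp1n ?dvd1n.
case: admissible_or_0 => [[gN gj]|ggcd0]; last by rewrite ggcd0 in ggcd_gt0.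
by rewrite dvdn_divisors.
Qed.

(* Admissible divisors are closed under lcm, so the largest one is a multiple of all of them. *)
Lemma ggcd_greatest j e : e %| N -> e ^ a %| j -> e %| ggcd a j N.
Proof.
move=> eN ej; have [gN gj] := ggcd_admissible j.
set g := ggcd a j N in gN gj *.
have lN : lcmn e g %| N by rewrite dvdn_lcm eN gN.
have l_le_g : lcmn e g <= g.
  apply: (bigmaxn_sup_seq (lcmn e g)) => //; first by rewrite -dvdn_divisors.
  exact: dvdn_lcm_expn.
have g_le_l : g <= lcmn e g by rewrite dvdn_leq ?dvdn_lcmr ?(dvdn_gt0 N_gt0 lN).
by rewrite -[g](@anti_leq (lcmn e g)) ?l_le_g ?g_le_l ?dvdn_lcml.
Qed.

Lemma ggcd_unique j c : c %| N -> c ^ a %| j ->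
  (forall e, e %| N -> e ^ a %| j -> e %| c) -> ggcd a j N = c.
Proof.
move=> cN cj c_greatest; have [gN gj] := ggcd_admissible j.
by apply/eqP; rewrite eqn_dvd (c_greatest _ gN gj) ggcd_greatest.
Qed.

End GeneralizedGcd.

Lemma ggcd_mul a N d l : 0 < N -> d %| N ->
  ggcd a (d ^ a * l) N = d * ggcd a l (N %/ d).
Proof.
move=> N_gt0 dN.
have d_gt0 : 0 < d := dvdn_gt0 N_gt0 dN.
have da_gt0 : 0 < d ^ a by rewrite expn_gt0 d_gt0.
have M_gt0 : 0 < N %/ d by rewrite divn_gt0 // dvdn_leq.
have [gM gl] := ggcd_admissible a M_gt0 l.
apply: ggcd_unique => //.
- by rewrite -[X in _ %| X](divnK dN) mulnC dvdn_pmul2r.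
- by rewrite expnMn dvdn_pmul2l.
move=> e eN ej.
have [t lcm_eq] : exists t, lcmn e d = d * t.
  by exists (lcmn e d %/ d); rewrite mulnC divnK // dvdn_lcmr.
apply: (dvdn_trans (dvdn_lcml e d)); rewrite lcm_eq dvdn_pmul2l //.
apply: ggcd_greatest => //.
  by rewrite -(dvdn_pmul2l d_gt0) -lcm_eq mulnC divnK // dvdn_lcm eN dN.
rewrite -(dvdn_pmul2l da_gt0) -expnMn -lcm_eq.
exact: dvdn_lcm_expn ej (dvdn_mulr _ (dvdnn _)).
Qed.

Lemma sfun_ggcd a (f g : nat -> algC) k j N : 0 < N -> k %| N ->
  sfun a f g k j = sfun 1 f g k (ggcd a j N).
Proof.
move=> N_gt0 kN; have [gN gj] := ggcd_admissible a N_gt0 j.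
rewrite /sfun big_seq_cond [RHS]big_seq_cond; apply: eq_bigl => d.
case dk: (d \in divisors k); rewrite ?andbF // !andTb expn1.
have dN : d %| N by rewrite (dvdn_trans _ kN) // dvdn_divisors ?(dvdn_gt0 N_gt0 kN).
apply/idP/idP => [|dg]; first exact: ggcd_greatest.
exact: dvdn_trans (dvdn_exp2r a dg) gj.
Qed.

Local Open Scope ring_scope.

(* Summing over the multiples of c in [1, cM] is summing over c*l for l in [1, M];
   by induction on M, since the block (cM, c(M+1)] contains only the multiple c(M+1). *)
Lemma sum_multiples c M (G : nat -> algC) : (0 < c)%N ->
  \sum_(1 <= j < (c * M).+1 | (c %| j)%N) G j = \sum_(1 <= l < M.+1) G (c * l)%N.
Proof.
move=> c_gt0; elim: M => [|M IHM]; first by rewrite muln0 !big_geq.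
rewrite big_nat_recr //= (@big_cat_nat _ _ _ (c * M).+1) //=; last first.
  by rewrite ltnS leq_mul2l leqnSn orbT.
rewrite IHM; congr (_ + _).
rewrite big_mkcond big_nat_recr /=; last by rewrite ltn_pmul2l.
rewrite dvdn_mulr // big_nat_cond big1 ?add0r // => j /andP[/andP[lo hi] _].
case: ifP => // /dvdnP[q def_j]; exfalso; subst j.
by rewrite [(q * c)%N]mulnC !ltn_pmul2l // in lo hi; lia.
Qed.

Lemma big_seq_pred1 (s : seq nat) x (X : nat -> algC) : uniq s -> x \in s ->
  \sum_(d <- s | x == d) X d = X x.
Proof.
move=> s_uniq xs; rewrite big_mkcond (bigD1_seq x) //= eqxx big1 ?addr0 //.
by move=> d; rewrite eq_sym => /negbTE ->.
Qed.

(* Grouping j in [1, K^a] by d = (j, K^a)_a: writing j = d^a l, the condition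
   (j, K^a)_a = d becomes (l, (K/d)^a)_a = 1, so the fibre sums are values of Psi. *)
Lemma sum_by_ggcd a K (w H : nat -> algC) : (0 < K)%N ->
  \sum_(1 <= j < (K ^ a).+1) w j * H (ggcd a j K) =
  \sum_(d <- divisors K) H d * Psi (fun l => w (d ^ a * l)%N) a (K %/ d).
Proof.
move=> K_gt0.
have split_j j : w j * H (ggcd a j K) =
    \sum_(d <- divisors K) (if ggcd a j K == d then w j * H d else 0).
  rewrite -big_mkcond big_seq_pred1 ?divisors_uniq // -dvdn_divisors //.
  by case: (ggcd_admissible a K_gt0 j).
rewrite (eq_bigr _ (fun j _ => split_j j)) exchange_big /=.
rewrite big_seq [RHS]big_seq; apply: eq_bigr => d; rewrite -dvdn_divisors // => dK.
have da_gt0 : (0 < d ^ a)%N by rewrite expn_gt0 (dvdn_gt0 K_gt0 dK).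
rewrite -big_mkcond /= -mulr_suml mulrC; congr (_ * _).
transitivity (\sum_(1 <= j < (d ^ a * (K %/ d) ^ a).+1 | (d ^ a %| j)%N)
                 (if ggcd a j K == d then w j else 0)).
  rewrite -expnMn [(d * _)%N]mulnC divnK // big_mkcond [RHS]big_mkcond; apply: eq_bigr => j _.
  have [<-|_] := eqVneq; last by case: ifP.
  by case: (ggcd_admissible a K_gt0 j) => _ ->.
rewrite sum_multiples // [RHS]big_mkcond; apply: eq_bigr => l _.
by rewrite ggcd_mul // -[X in _ == X](muln1 d) eqn_pmul2l ?(dvdn_gt0 K_gt0 dK).
Qed.

Lemma eq_Psi (w1 w2 : nat -> algC) a M : (forall l, (0 < l)%N -> w1 l = w2 l) ->
  Psi w1 a M = Psi w2 a M.
Proof.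
move=> w12; rewrite /Psi big_nat_cond [RHS]big_nat_cond.
by apply: eq_bigr => l /andP[/andP[l_gt0 _] _]; apply: w12.
Qed.

Lemma PsiZ c (w : nat -> algC) a M : Psi (fun l => c * w l) a M = c * Psi w a M.
Proof. by rewrite /Psi mulr_sumr. Qed.

Lemma PsiD (w1 w2 : nat -> algC) a M :
  Psi (fun l => w1 l + w2 l) a M = Psi w1 a M + Psi w2 a M.
Proof. by rewrite /Psi big_split. Qed.

Lemma Psi1 a M : Psi (fun=> 1) a M = (Phi a M)%:R.
Proof.
rewrite /Phi -sum1_card natr_sum.
rewrite (eq_bigl (fun l : 'I_(M ^ a).+1 => (0 < l)%N && (ggcd a l M == 1%N))); last first.
  by move=> l; rewrite inE.
rewrite -(big_mkord (fun l => (0 < l)%N && (ggcd a l M == 1%N)) (fun=> 1%:R)).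
rewrite big_ltn_cond //= /Psi [LHS]big_nat_cond [RHS]big_nat_cond.
by apply: eq_bigl => -[|l]; rewrite ?andbF ?andbT.
Qed.

Lemma Psi_dilate_mult (omega : nat -> algC) a M d : completely_multiplicative omega ->
  (0 < d)%N -> Psi (fun l => omega (d ^ a * l)%N) a M = omega d ^+ a * Psi omega a M.
Proof.
move=> [omega1 omegaM] d_gt0.
have omegaX e : omega (d ^ e)%N = omega d ^+ e.
  elim: e => [|e IHe]; first by rewrite expn0 omega1.
  by rewrite expnS omegaM ?expn_gt0 ?d_gt0 // IHe exprS.
rewrite -PsiZ; apply: eq_Psi => l l_gt0.
by rewrite omegaM ?expn_gt0 ?d_gt0 // omegaX.
Qed.

Lemma Psi_dilate_add (omega : nat -> algC) a M d : completely_additive omega ->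
  (0 < d)%N ->
  Psi (fun l => omega (d ^ a * l)%N) a M = omega (d ^ a)%N * (Phi a M)%:R + Psi omega a M.
Proof.
move=> omegaD d_gt0; rewrite -Psi1 -PsiZ -PsiD; apply: eq_Psi => l l_gt0.
by rewrite omegaD ?expn_gt0 ?d_gt0 // mulr1.
Qed.

Theorem mainTheorem9 (a n : nat) (k : 'I_n -> nat) (f g : 'I_n -> nat -> algC)
  (omega : nat -> algC) :
  (0 < a)%N -> (0 < n)%N -> (forall i, 0 < k i)%N ->
  let K := \big[lcmn/1%N]_(i < n) k i in
  let H := fun m : nat => \prod_(i < n) sfun 1 (f i) (g i) (k i) m in
  (completely_multiplicative omega ->
     \sum_(1 <= j < (K ^ a).+1) omega j * \prod_(i < n) sfun a (f i) (g i) (k i) j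
     = \sum_(d <- divisors K) omega d ^+ a * H d * Psi omega a (K %/ d)%N)
  /\
  (completely_additive omega ->
     \sum_(1 <= j < (K ^ a).+1) omega j * \prod_(i < n) sfun a (f i) (g i) (k i) j
     = \sum_(d <- divisors K) omega (d ^ a)%N * H d * (Phi a (K %/ d)%N)%:R
       + \sum_(d <- divisors K) H d * Psi omega a (K %/ d)%N).
Proof.
move=> _ _ k_gt0 K H.
have K_gt0 : (0 < K)%N.
  by apply: (big_ind (fun m => 0 < m)%N) => // x y x_gt0 y_gt0; rewrite lcmn_gt0 x_gt0.
have -> : \sum_(1 <= j < (K ^ a).+1) omega j * \prod_(i < n) sfun a (f i) (g i) (k i) j
    = \sum_(1 <= j < (K ^ a).+1) omega j * H (ggcd a j K).
  apply: eq_bigr => j _; congr (_ * _); apply: eq_bigr => i _.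
  by apply: sfun_ggcd => //; rewrite (biglcmn_sup i).
rewrite sum_by_ggcd //; split => [omega_mult|omega_add].
  apply: eq_big_seq => d; rewrite -dvdn_divisors // => dK.
  by rewrite Psi_dilate_mult ?(dvdn_gt0 K_gt0 dK) // mulrCA mulrA.
rewrite -big_split; apply: eq_big_seq => d; rewrite -dvdn_divisors // => dK.
by rewrite Psi_dilate_add ?(dvdn_gt0 K_gt0 dK) //= mulrDr mulrCA mulrA.
Qed.
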